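(* Let $(A, b, c)$ be a $k$-level LP instance. Let $p \le k-1$ and write $A_{pi} = \begin{pmatrix} A'_{pi} \\ A''_{pi}\end{pmatrix}$, $b_p = \begin{pmatrix} b'_p \\ b''_p\end{pmatrix}$ for each $i = 1,\ldots,k$, such that $A'_{pi} = 0$ for all $i = p+1,\ldots,k$. Define a $k$-level LP instance $(\hat{A}, \hat{b}, \hat{c})$ by $\hat{c} = c$, $\hat{A}_{li} = A_{li}$, $\hat{b}_l = b_l$ for all $l \ne p, p+1$ and all $i$, and $\hat{A}_{pi} = A''_{pi}$, $\hat{b}_p = b''_p$, $\hat{A}_{p+1\,i} = \begin{pmatrix} A'_{pi} \\ A_{p+1\,i}\end{pmatrix}$, $\hat{b}_{p+1} = \begin{pmatrix} b'_p \\ b_{p+1}\end{pmatrix}$ for $i = 1,\ldots,k$. Then the feasible set of the instance $(A,b,c)$ equals the feasible set of the instance $(\hat{A}, \hat{b}, \hat{c})$.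
   Context: A $k$-level LP instance $(A,b,c)$ has data $A_{li} \in \mathbb{Q}^{m_l \times n_i}$, $b_l \in \mathbb{Q}^{m_l}$, $c_{li} \in \mathbb{Q}^{n_i}$. Player $l$ chooses $x_l \in \mathbb{R}^{n_l}$ after players $1,\ldots,l-1$. The $l$-th player's problem, given $x_1,\ldots,x_{l-1}$, is $\inf_{x_l,\ldots,x_k}\{\sum_{i=l}^k c_{li}^\top x_i : \sum_{i=1}^k A_{li}x_i \ge b_l,\ (x_{l+1},\ldots,x_k) \in \mathcal{S}(\text{problem of player } l+1 \text{ given } x_1,\ldots,x_l)\}$, and the $k$-th player's problem is $\inf_{x_k}\{c_{kk}^\top x_k : \sum_{i=1}^k A_{ki}x_i \ge b_k\}$. The instance is identified with the first player's problem; its feasible set is the set of feasible $(x_1,\ldots,x_k)$ of the first player's problem. $\mathcal{S}(\cdot)$ denotes the optimal solution set (optimistic setting). *)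

From HB Require Import structures.
From mathcomp Require Import all_boot all_order all_algebra.
From mathcomp Require Import reals.
Set Implicit Arguments. Unset Strict Implicit. Unset Printing Implicit Defensive.
Import Order.TTheory GRing.Theory Num.Theory.
Local Open Scope ring_scope.

(* Levels and variable blocks are indexed by
   'I_k (0-based: level l of the paper is level l-1 here).  The variable block
   dimensions n are a parameter of the type, so that an instance and its
   transformed version share the same variables.  c l i is only used for
   l <= i. *)
Record klp (k : nat) (n : 'I_k -> nat) := KLP {
  m : 'I_k -> nat;
  A : forall l i : 'I_k, 'M[rat]_(m l, n i);
  b : forall l : 'I_k, 'cV[rat]_(m l);
  c : forall l i : 'I_k, 'cV[rat]_(n i)
}.
Arguments klp : clear implicits.

Definition vars (R : realType) {k : nat} (n : 'I_k -> nat) :=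
  forall i : 'I_k, 'cV[R]_(n i).

Section KLevel.
Variables (R : realType) (k : nat) (n : 'I_k -> nat) (P : klp k n).

Definition lconstr (l : 'I_k) (x : vars R n) : Prop :=
  forall r : 'I_(m P l),
    ratr (b P l r 0) <= (\sum_(i < k) map_mx ratr (A P l i) *m x i) r 0.

Definition lobj (l : 'I_k) (x : vars R n) : R :=
  \sum_(i < k | (l <= i)%N) ((map_mx ratr (c P l i))^T *m x i) 0 0.

(* pfeas fuel l x : x is feasible for the problem of player l given the
   prefix (x_i)_{i<l} of x.  The fuel argument only serves to make the
   recursion over levels l, l+1, ..., k-1 structural; it is used with
   fuel = k, which is always enough.  The condition on player l+1 says that
   (x_{l+1},...,x_k) is an optimal solution of player l+1's problem given
   x_1..x_l (optimistic setting): it is feasible for it and its objective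
   value is <= that of every feasible point with the same prefix. *)
Fixpoint pfeas (fuel l : nat) (x : vars R n) : Prop :=
  match fuel with
  | 0 => True
  | f.+1 =>
    match (insub l : option 'I_k) with
    | None => True
    | Some l' =>
      lconstr l' x /\
      match (insub l.+1 : option 'I_k) with
      | None => True
      | Some l'' =>
        pfeas f l.+1 x /\
        forall y : vars R n,
          (forall i : 'I_k, (i <= l)%N -> y i = x i) ->
          pfeas f l.+1 y -> lobj l'' x <= lobj l'' y
      end
    end
  end.

Definition klp_feasible (x : vars R n) : Prop := pfeas k 0 x.

End KLevel.

From HB Require Import structures.
From mathcomp Require Import all_boot all_order all_algebra.
From mathcomp Require Import reals.
Import Order.TTheory GRing.Theory Num.Theory.
Set Implicit Arguments. Unset Strict Implicit. Unset Printing Implicit Defensive.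
Local Open Scope ring_scope.

(** The rows [A'_p x >= b'_p] only involve [x_1, ..., x_p], which every
    competitor of player [p+1] shares with [x].  Hence moving them from
    level [p] to level [p+1] intersects each parametric problem of player
    [p+1] either with everything or with nothing: its optimal solutions are
    unchanged whenever the rows hold, and player [p] still requires them
    through the feasibility of the follower's problem.  No other level sees
    the change. *)


Lemma sum_col_mx (V : nmodType) (I : Type) (r : seq I) (P : pred I) m1 m2 n'
    (F1 : I -> 'M[V]_(m1, n')) (F2 : I -> 'M[V]_(m2, n')) :
  \sum_(i <- r | P i) col_mx (F1 i) (F2 i) =
  col_mx (\sum_(i <- r | P i) F1 i) (\sum_(i <- r | P i) F2 i).
Proof.
apply: (big_rec3 (fun s s1 s2 => s = col_mx s1 s2)) => [|i s s1 s2 _ ->].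
  by rewrite col_mx0.
by rewrite add_col_mx.
Qed.

Section LinearConstraints.
Variables (R : realType) (k : nat) (n : 'I_k -> nat).

Definition lin_constr {q} (bb : 'cV[rat]_q) (M : forall i : 'I_k, 'M[rat]_(q, n i))
    (x : vars R n) : Prop :=
  forall r : 'I_q, ratr (bb r 0) <= (\sum_(i < k) map_mx ratr (M i) *m x i) r 0.

Lemma lconstrE (P : klp k n) l x : lconstr P l x <-> lin_constr (b P l) (A P l) x.
Proof. by []. Qed.

Lemma lin_constr_castmx q q' (e : q = q') (bb : 'cV[rat]_q) (bb' : 'cV[rat]_q')
    (M : forall i, 'M[rat]_(q, n i)) (M' : forall i, 'M[rat]_(q', n i)) x :
  bb' = castmx (e, erefl) bb -> (forall i, M' i = castmx (e, erefl) (M i)) ->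
  lin_constr bb' M' x <-> lin_constr bb M x.
Proof.
case: q' / e bb' M' => bb' M' -> eM; rewrite castmx_id /lin_constr.
by under eq_bigr do rewrite eM castmx_id.
Qed.

Lemma lin_constr_col_mx q1 q2 (b1 : 'cV[rat]_q1) (b2 : 'cV[rat]_q2)
    (M1 : forall i, 'M[rat]_(q1, n i)) (M2 : forall i, 'M[rat]_(q2, n i)) x :
  lin_constr (col_mx b1 b2) (fun i => col_mx (M1 i) (M2 i)) x <->
  lin_constr b1 M1 x /\ lin_constr b2 M2 x.
Proof.
rewrite /lin_constr; under eq_bigr do rewrite map_col_mx mul_col_mx.
rewrite sum_col_mx; split=> [hx | [hx1 hx2] r].
  by split=> r; [have := hx (lshift q2 r) | have := hx (rshift q1 r)];
    rewrite ?col_mxEu ?col_mxEd.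
by rewrite -(splitK r); case: split => r' /=; rewrite ?col_mxEu ?col_mxEd.
Qed.

Lemma lin_constr_prefix (p : nat) q (bb : 'cV[rat]_q) (M : forall i, 'M[rat]_(q, n i))
    (x y : vars R n) :
  (forall i : 'I_k, (p < i)%N -> M i = 0) ->
  (forall i : 'I_k, (i <= p)%N -> y i = x i) ->
  lin_constr bb M y <-> lin_constr bb M x.
Proof.
move=> M0 exy; rewrite /lin_constr.
suff -> : \sum_(i < k) map_mx ratr (M i) *m y i = \sum_(i < k) map_mx ratr (M i) *m x i
  by [].
apply: eq_bigr => i _; case: (leqP i p) => [/exy -> // | /M0 ->].
by rewrite map_mx0 !mul0mx.
Qed.

End LinearConstraints.

Section Unfolding.
Variables (R : realType) (k : nat) (n : 'I_k -> nat) (P : klp k n).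

Lemma pfeas_last f l (x : vars R n) (hl : (l < k)%N) :
  (k <= l.+1)%N -> pfeas P f.+1 l x <-> lconstr P (Ordinal hl) x.
Proof. by move=> hkl; rewrite /= insubT insubF ?ltnNge ?hkl //; split=> [[]|]. Qed.

Lemma pfeas_step f l (x : vars R n) (hl : (l < k)%N) (hl1 : (l.+1 < k)%N) :
  pfeas P f.+1 l x <->
  lconstr P (Ordinal hl) x /\ pfeas P f l.+1 x /\
  forall y : vars R n, (forall i : 'I_k, (i <= l)%N -> y i = x i) ->
    pfeas P f l.+1 y -> lobj P (Ordinal hl1) x <= lobj P (Ordinal hl1) y.
Proof. by rewrite /= insubT insubT. Qed.

End Unfolding.

Section MovePrefixConstraint.
Variables (R : realType) (k : nat) (n : 'I_k -> nat) (P Q : klp k n).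
Variables (p p1 : 'I_k) (C : vars R n -> Prop).
Hypothesis p1E : p1 = p.+1 :> nat.
Hypothesis C_prefix : forall x y : vars R n,
  (forall i : 'I_k, (i <= p)%N -> y i = x i) -> C y <-> C x.
Hypothesis cQ : c Q = c P.
Hypothesis lconstr_p : forall x, lconstr P p x <-> C x /\ lconstr Q p x.
Hypothesis lconstr_p1 : forall x, lconstr Q p1 x <-> C x /\ lconstr P p1 x.
Hypothesis lconstr_other : forall (l : 'I_k) (x : vars R n),
  l != p -> l != p1 -> lconstr Q l x <-> lconstr P l x.

Lemma lconstr_off_p (l : 'I_k) (x : vars R n) :
  l != p -> lconstr Q l x <-> (l = p1 :> nat -> C x) /\ lconstr P l x.
Proof.
move=> lp; have [->|lp1] := eqVneq l p1.
  by rewrite lconstr_p1; split=> [[]|[/(_ erefl)]].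
have nlp1 : l <> p1 :> nat by move/val_inj/eqP; rewrite (negbTE lp1).
by rewrite lconstr_other //; split=> [|[]].
Qed.

Lemma pfeas_move f l (x : vars R n) : (l + f)%N = k ->
  pfeas Q f l x <-> (l = p1 -> C x) /\ pfeas P f l x.
Proof.
have lobjQ : @lobj R k n Q = @lobj R k n P by rewrite /lobj cQ.
elim: f l x => [|f IH] l x; rewrite ?addn0 => hlf.
  split=> // _; split=> // ep; have := ltn_ord p1; by rewrite -ep hlf ltnn.
have hl : (l < k)%N by rewrite -hlf addnS ltnS leq_addr.
have IHy (y : vars R n) : pfeas Q f l.+1 y <-> (l.+1 = p1 -> C y) /\ pfeas P f l.+1 y.
  by apply: IH; rewrite addSnnS.
case: (ltnP l.+1 k) => hl1; last first.
  have lp : Ordinal hl != p.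
    by apply/eqP => /(congr1 val) /= lE; move: hl1; rewrite lE leqNgt -p1E ltn_ord.
  by rewrite !(pfeas_last _ _ _ hl hl1) lconstr_off_p.
rewrite !(pfeas_step _ _ _ hl hl1) lobjQ.
have [lp | lp] := eqVneq (Ordinal hl) p; last first.
  have nl1 : l.+1 <> p1 by rewrite p1E => -[] lE; move/eqP: lp; apply; apply: val_inj.
  have IHy' (y : vars R n) : pfeas Q f l.+1 y <-> pfeas P f l.+1 y.
    by split=> [/IHy [] | Fy] //; apply/IHy.
  setoid_rewrite IHy'; rewrite lconstr_off_p //; tauto.
have lE : l = p := congr1 val lp.
have l1 : l.+1 = p1 by rewrite p1E lE.
have nl : l <> p1 by rewrite -l1; apply: n_Sn.
rewrite lp lconstr_p; split.
  case=> lQx [/IHy [/(_ l1) Cx Fx] opt].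
  do 2!split=> //; split=> // y exy Fy.
  have Cy : C y by apply/(C_prefix (x := x)) => //; rewrite -lE.
  by apply: opt exy _; apply/IHy.
case=> _ [[Cx lQx] [Fx opt]]; split=> //; split; first by apply/IHy.
by move=> y exy /IHy [_ Fy]; exact: opt.
Qed.

Theorem klp_feasible_move_prefix_constr (x : vars R n) :
  klp_feasible Q x <-> klp_feasible P x.
Proof.
rewrite /klp_feasible pfeas_move //; split=> [[]//|Fx]; split=> // /esym.
by rewrite p1E.
Qed.

End MovePrefixConstraint.

Theorem lemma3p3 (R : realType) (k : nat) (n : 'I_k -> nat)
  (P Ph : klp k n) (p p1 : 'I_k) (hp1 : nat_of_ord p1 = (nat_of_ord p).+1)
  (m1 m2 : nat)
  (A1 : forall i : 'I_k, 'M[rat]_(m1, n i))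
  (A2 : forall i : 'I_k, 'M[rat]_(m2, n i))
  (b1 : 'cV[rat]_m1) (b2 : 'cV[rat]_m2)
  (* splitting of level p of (A,b,c) *)
  (hm : m P p = (m1 + m2)%N)
  (hA : forall i, A P p i = castmx (esym hm, erefl) (col_mx (A1 i) (A2 i)))
  (hb : b P p = castmx (esym hm, erefl) (col_mx b1 b2))
  (hA1 : forall i : 'I_k, (p < i)%N -> A1 i = 0)
  (* definition of (Ah, bh, ch) *)
  (hc : c Ph = c P)
  (hml : forall l : 'I_k, l != p -> l != p1 -> m Ph l = m P l)
  (hAl : forall (l : 'I_k) (h1 : l != p) (h2 : l != p1) (i : 'I_k),
     A Ph l i = castmx (esym (hml l h1 h2), erefl) (A P l i))
  (hbl : forall (l : 'I_k) (h1 : l != p) (h2 : l != p1),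
     b Ph l = castmx (esym (hml l h1 h2), erefl) (b P l))
  (hmp : m Ph p = m2)
  (hAp : forall i, A Ph p i = castmx (esym hmp, erefl) (A2 i))
  (hbp : b Ph p = castmx (esym hmp, erefl) b2)
  (hmp1 : m Ph p1 = (m1 + m P p1)%N)
  (hAp1 : forall i, A Ph p1 i = castmx (esym hmp1, erefl) (col_mx (A1 i) (A P p1 i)))
  (hbp1 : b Ph p1 = castmx (esym hmp1, erefl) (col_mx b1 (b P p1))) :
  forall x : vars R n, klp_feasible P x <-> klp_feasible Ph x.
Proof.
have C_prefix (x y : vars R n) :
    (forall i : 'I_k, (i <= p)%N -> y i = x i) ->
    lin_constr b1 A1 y <-> lin_constr b1 A1 x.
  exact: lin_constr_prefix.
have lconstr_p (x : vars R n) : lconstr P p x <-> lin_constr b1 A1 x /\ lconstr Ph p x.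
  by rewrite !lconstrE (lin_constr_castmx _ hb hA) lin_constr_col_mx
             (lin_constr_castmx _ hbp hAp).
have lconstr_p1 (x : vars R n) : lconstr Ph p1 x <-> lin_constr b1 A1 x /\ lconstr P p1 x.
  by rewrite !lconstrE (lin_constr_castmx _ hbp1 hAp1) lin_constr_col_mx.
have lconstr_other (l : 'I_k) (x : vars R n) (lp : l != p) (lp1 : l != p1) :
    lconstr Ph l x <-> lconstr P l x.
  by rewrite !lconstrE (lin_constr_castmx _ (hbl l lp lp1) (hAl l lp lp1)).
move=> x; apply: iff_sym.
exact: (klp_feasible_move_prefix_constr hp1 C_prefix hc lconstr_p lconstr_p1 lconstr_other).
Qed.
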